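(* Let $V:\mathbb{R}^{d_1}\times\mathbb{R}^{d_2}\to\mathbb{R}^n$ be residual-homogeneous, $V(\theta_1,\theta_2)=\Phi\theta_1+g(\theta_2)$, where $\Phi\in\mathbb{R}^{n\times d_1}$ has full rank and $g$ is continuously differentiable and $h$-homogeneous, and suppose there are constants $C,\ell>0$ with $\Vert V(\theta)\Vert_\mu\le C\Vert\theta\Vert^\ell$ for all $\theta=(\theta_1,\theta_2)$. Let $\Pi_\Phi$ be the projection onto the column span of $\Phi$ and let $B_\Phi=\frac{\Vert (I-\gamma P)(V^*-\Pi_\Phi V^* )\Vert_\mu}{1-\gamma}$. Then for any initial condition $\theta(0)=\theta_0$, if $\theta(t)$ follows the dynamics $$\dot\theta=-\nabla V(\theta)^T A\,(V(\theta)-V^* ),$$ we have $\liminf_{t\to\infty}\Vert V(\theta(t))-\Pi_\Phi V^*\Vert_\mu\le B_\Phi$.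
   Context: A Markov reward process has finite state space $\mathcal{S}$ with $|\mathcal{S}|=n$, transition matrix $P$ (entries $P(s'|s)$) defining an irreducible, aperiodic Markov chain with stationary distribution $\mu$, a finite reward function $r(s,s')$, and discount factor $\gamma\in[0,1)$. Let $R(s)=\mathbb{E}_{s'\sim P(\cdot|s)}[r(s,s')]$ and let $V^*\in\mathbb{R}^n$ be the unique solution of $V^*=R+\gamma PV^*$. Let $D_\mu=\mathrm{diag}(\mu)$ and $A:=D_\mu(I-\gamma P)$. For $x\in\mathbb{R}^n$, $\Vert x\Vert_\mu^2=x^TD_\mu x$; $\Vert\theta\Vert$ is the Euclidean norm. $\nabla V(\theta)$ is the Jacobian of $V$ with respect to $\theta=(\theta_1,\theta_2)\in\mathbb{R}^{d_1+d_2}$. A differentiable $f:\mathbb{R}^k\to\mathbb{R}^m$ is $h$-homogeneous (for $h\in\mathbb{R}$) if $f(x)=h\,\nabla f(x)\,x$ for all $x$. The projection $\Pi_\Phi$ is taken orthogonal with respect to the inner product $\langle x,y\rangle_\mu=x^TD_\mu y$. *)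

(* Vectors are ROW vectors 'rV[R]_k, following MathComp-Analysis's
   convention for derivatives: for f : 'rV_p -> 'rV_q, the library jacobian
   'J f x : 'M_(p, q) satisfies 'D_v f x = v *m 'J f x, i.e. 'J f x is the
   TRANSPOSE of the usual (q x p) Jacobian matrix nabla f(x). *)
From HB Require Import structures.
From mathcomp Require Import all_boot all_order all_algebra.
From mathcomp Require Import all_classical all_reals all_analysis.
Set Implicit Arguments. Unset Strict Implicit. Unset Printing Implicit Defensive.
Import Order.TTheory GRing.Theory Num.Theory.
Import numFieldNormedType.Exports.
Local Open Scope ring_scope.

Section Defs.
Variable R : realType.

Definition matvec (m k : nat) (M : 'M[R]_(m, k)) (x : 'rV[R]_k) : 'rV[R]_m :=
  (M *m x^T)^T.

(* P(s'|s) = P s s' : a (row-)stochastic matrix *)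
Definition stochastic (n : nat) (P : 'M[R]_n) : Prop :=
  (forall i j, 0 <= P i j) /\ (forall i, \sum_j P i j = 1).

Definition irreducible (n : nat) (P : 'M[R]_n) : Prop :=
  forall i j, exists k : nat, 0 < (P ^+ k) i j.

(* aperiodic: for every state i, gcd {k >= 1 | P^k(i,i) > 0} = 1, i.e.
   every common divisor of the return times equals 1 *)
Definition aperiodic (n : nat) (P : 'M[R]_n) : Prop :=
  forall i (d : nat),
    (forall k : nat, (0 < k)%N -> 0 < (P ^+ k) i i -> (d %| k)%N) -> d = 1%N.

Definition stationary_dist (n : nat) (P : 'M[R]_n) (mu : 'rV[R]_n) : Prop :=
  (forall i, 0 <= mu 0 i) /\ \sum_i mu 0 i = 1 /\ mu *m P = mu.

Definition exp_reward (n : nat) (P : 'M[R]_n) (r : 'I_n -> 'I_n -> R)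
  : 'rV[R]_n := \row_s \sum_s' P s s' * r s s'.

Definition Dmu (n : nat) (mu : 'rV[R]_n) : 'M[R]_n := diag_mx mu.

Definition Amat (n : nat) (mu : 'rV[R]_n) (gamma : R) (P : 'M[R]_n) : 'M[R]_n :=
  Dmu mu *m (1%:M - gamma *: P).

Definition muinner (n : nat) (mu : 'rV[R]_n) (x y : 'rV[R]_n) : R :=
  \sum_i mu 0 i * x 0 i * y 0 i.

Definition munorm (n : nat) (mu : 'rV[R]_n) (x : 'rV[R]_n) : R :=
  Num.sqrt (muinner mu x x).

Definition euclid_norm (k : nat) (x : 'rV[R]_k) : R :=
  Num.sqrt (\sum_i x 0 i ^+ 2).

Definition C1 (p q : nat) (f : 'rV[R]_p -> 'rV[R]_q) : Prop :=
  (forall x, differentiable f x) /\ continuous (fun x => 'J f x).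

Definition homogeneous (p q : nat) (h : R) (f : 'rV[R]_p -> 'rV[R]_q) : Prop :=
  (forall x, differentiable f x) /\ (forall x, f x = h *: (x *m 'J f x)).

(* residual-homogeneous parametrization V(theta1, theta2) = Phi theta1 + g theta2,
   theta = (theta1, theta2) stored as the row vector row_mx theta1 theta2 *)
Definition resV (n d1 d2 : nat) (Phi : 'M[R]_(n, d1))
  (g : 'rV[R]_d2 -> 'rV[R]_n) (theta : 'rV[R]_(d1 + d2)) : 'rV[R]_n :=
  matvec Phi (lsubmx theta) + g (rsubmx theta).

End Defs.

From HB Require Import structures.
From mathcomp Require Import all_boot all_order all_algebra.
From mathcomp Require Import all_classical all_reals all_analysis.
From mathcomp Require Import ring lra.
Import Order.TTheory GRing.Theory Num.Theory.
Import numFieldNormedType.Exports.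
Local Open Scope classical_set_scope.
Local Open Scope ring_scope.
Set Implicit Arguments. Unset Strict Implicit. Unset Printing Implicit Defensive.

(* Write Pi_Phi Vstar = Phi w and e(theta) = V(theta) - Phi w.  Euler's
   identity for the h-homogeneous g gives
     nabla V(theta) (theta1 - w, h theta2) = e(theta),
   so along the flow the weighted distance L = |theta1 - w|^2 + h |theta2|^2
   satisfies L' = -2 <e, (I - gamma P)(V(theta) - Vstar)>_mu.  As mu is
   stationary, P is a contraction for |.|_mu, whence
     L' <= 2 |e|_mu (K - (1 - gamma) |e|_mu),
   K = |(I - gamma P)(Vstar - Pi_Phi Vstar)|_mu.  If |e|_mu stayed above some
   c > K / (1 - gamma) for all large t, L would decrease at a uniform rate and
   become negative.  When h < 0, |g(u x)|^2 is nonincreasing in u > 0 and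
   vanishes at u = 0, so g = 0 and h may be replaced by 0. *)

Section weighted_sums.
Variable R : realType.

Lemma weighted_cauchy_schwarz (I : finType) (w a b : I -> R) :
  (forall i, 0 <= w i) ->
  (\sum_i w i * a i * b i) ^+ 2 <=
  (\sum_i w i * a i ^+ 2) * (\sum_i w i * b i ^+ 2).
Proof.
move=> w_ge0.
have lagrange : ((\sum_i w i * a i ^+ 2) * (\sum_i w i * b i ^+ 2)
                 - (\sum_i w i * a i * b i) ^+ 2) *+ 2 =
    \sum_i \sum_j w i * w j * (a i * b j - a j * b i) ^+ 2.
  have swap : \sum_i \sum_j w j * a j ^+ 2 * (w i * b i ^+ 2) =
              \sum_i \sum_j w i * a i ^+ 2 * (w j * b j ^+ 2).
    by rewrite exchange_big.
  rewrite mulrnBl expr2 !big_distrlr /= mulr2n -{2}swap.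
  rewrite -sumrMnl -big_split -sumrB; apply: eq_bigr => i _.
  rewrite -sumrMnl -big_split -sumrB; apply: eq_bigr => j _ /=; ring.
have : 0 <= ((\sum_i w i * a i ^+ 2) * (\sum_i w i * b i ^+ 2)
             - (\sum_i w i * a i * b i) ^+ 2) *+ 2.
  rewrite lagrange; apply: sumr_ge0 => i _; apply: sumr_ge0 => j _.
  by rewrite mulr_ge0 ?sqr_ge0 ?mulr_ge0.
by rewrite pmulrn_lge0 // subr_ge0.
Qed.

End weighted_sums.

Section matvec.
Variable R : realType.

Lemma matvecE m k (M : 'M[R]_(m, k)) x : matvec M x = x *m M^T.
Proof. by rewrite /matvec trmx_mul trmxK. Qed.

Lemma matvec_entry m k (M : 'M[R]_(m, k)) x i :
  matvec M x 0 i = \sum_j M i j * x 0 j.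
Proof. by rewrite /matvec !mxE; apply: eq_bigr => j _; rewrite !mxE. Qed.

Lemma matvecB m k (M : 'M[R]_(m, k)) x y :
  matvec M (x - y) = matvec M x - matvec M y.
Proof. by rewrite !matvecE mulmxBl. Qed.

Lemma matvec_subZ n (P : 'M[R]_n) (c : R) x :
  matvec (1%:M - c *: P) x = x - c *: matvec P x.
Proof.
by rewrite !matvecE linearB /= trmx1 linearZ /= mulmxBr mulmx1 scalemxAr.
Qed.

End matvec.

Section mu_inner_product.
Variables (R : realType) (n : nat) (mu : 'rV[R]_n).
Hypothesis mu_ge0 : forall i, 0 <= mu 0 i.

Lemma muinner_ge0 x : 0 <= muinner mu x x.
Proof. by apply: sumr_ge0 => i _; rewrite -mulrA mulr_ge0 // -expr2 sqr_ge0. Qed.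

Lemma munorm_sqr x : munorm mu x ^+ 2 = muinner mu x x.
Proof. by rewrite sqr_sqrtr // muinner_ge0. Qed.

Lemma muinner_le_munorm x y : muinner mu x y <= munorm mu x * munorm mu y.
Proof.
have cs : muinner mu x y ^+ 2 <= (munorm mu x * munorm mu y) ^+ 2.
  rewrite exprMn !munorm_sqr /muinner.
  under [X in _ <= X * _]eq_bigr do rewrite -mulrA -expr2.
  under [X in _ <= _ * X]eq_bigr do rewrite -mulrA -expr2.
  exact: weighted_cauchy_schwarz.
have := mulr_ge0 (sqrtr_ge0 (muinner mu x x)) (sqrtr_ge0 (muinner mu y y)).
rewrite -/(munorm mu x) -/(munorm mu y); nra.
Qed.

Lemma muinnerBr x y z :
  muinner mu x (y - z) = muinner mu x y - muinner mu x z.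
Proof. by rewrite /muinner -sumrB; apply: eq_bigr => i _; rewrite !mxE; ring. Qed.

Lemma muinnerZr c x y : muinner mu x (c *: y) = c * muinner mu x y.
Proof. by rewrite /muinner mulr_sumr; apply: eq_bigr => i _; rewrite mxE; ring. Qed.

End mu_inner_product.

Lemma muinner_matvec_mulmx (R : realType) (n : nat) (mu x y : 'rV[R]_n)
    (M : 'M[R]_n) :
  muinner mu x (matvec M y) = (x *m (Dmu mu *m M) *m y^T) 0 0.
Proof.
rewrite /Dmu mulmxA -mulmxA mul_mx_diag /muinner mxE; apply: eq_bigr => i _.
by rewrite /matvec !mxE; ring.
Qed.

Section stationary_contraction.
Variables (R : realType) (n : nat) (P : 'M[R]_n) (mu : 'rV[R]_n).
Hypotheses (P_stochastic : stochastic P) (mu_stationary : stationary_dist P mu).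

Let mu_ge0 : forall i, 0 <= mu 0 i. Proof. by case: mu_stationary. Qed.

Lemma munorm_matvec_le x : munorm mu (matvec P x) <= munorm mu x.
Proof.
have [P_ge0 P_sum1] := P_stochastic; have [_ [_ muP]] := mu_stationary.
have row_jensen i : matvec P x 0 i ^+ 2 <= \sum_j P i j * x 0 j ^+ 2.
  have -> : matvec P x 0 i = \sum_j P i j * 1 * x 0 j.
    by rewrite matvec_entry; apply: eq_bigr => j _; rewrite mulr1.
  apply: le_trans (weighted_cauchy_schwarz (fun=> 1) (x 0) (P_ge0 i)) _.
  have -> : \sum_j P i j * 1 ^+ 2 = 1.
    by under eq_bigr do rewrite expr1n mulr1; exact: P_sum1.
  by rewrite mul1r.
have mass_balance : \sum_i mu 0 i * \sum_j P i j * x 0 j ^+ 2 = muinner mu x x.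
  under eq_bigr do rewrite mulr_sumr.
  rewrite exchange_big; apply: eq_bigr => j _ /=.
  have -> : mu 0 j = (mu *m P) 0 j by rewrite muP.
  by rewrite mxE !mulr_suml; apply: eq_bigr => i _; ring.
rewrite ler_wsqrtr // -mass_balance; apply: ler_sum => i _.
by rewrite -mulrA -expr2 ler_wpM2l.
Qed.

Lemma muinner_subZ_ge (gamma : R) e u : 0 <= gamma ->
  (1 - gamma) * munorm mu e ^+ 2
    - munorm mu e * munorm mu (matvec (1%:M - gamma *: P) u)
  <= muinner mu e (matvec (1%:M - gamma *: P) (e - u)).
Proof.
move=> gamma_ge0.
have ePe : muinner mu e (matvec P e) <= munorm mu e ^+ 2.
  apply: le_trans (muinner_le_munorm mu_ge0 _ _) _.
  by rewrite expr2 ler_wpM2l ?sqrtr_ge0 ?munorm_matvec_le.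
have eMu := muinner_le_munorm mu_ge0 e (matvec (1%:M - gamma *: P) u).
rewrite matvecB muinnerBr [in X in muinner _ _ X]matvec_subZ muinnerBr.
rewrite muinnerZr -munorm_sqr //.
nra.
Qed.

End stationary_contraction.

Section weighted_square_distance.
Variables (R : realType) (m : nat).
Implicit Types (c a x : 'rV[R]_m) (F : R -> 'rV[R]_m).

Definition wsqdist (c a x : 'rV[R]_m) : R := \sum_k c 0 k * (x 0 k - a 0 k) ^+ 2.

Lemma wsqdist_ge0 c a x : (forall k, 0 <= c 0 k) -> 0 <= wsqdist c a x.
Proof. by move=> c_ge0; apply: sumr_ge0 => k _; rewrite mulr_ge0 ?sqr_ge0. Qed.

Lemma wsqdistxx c a : wsqdist c a a = 0.
Proof. by rewrite /wsqdist big1 // => k _; rewrite subrr expr0n mulr0. Qed.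

Lemma wsqdist1_eq0 a x : wsqdist (const_mx 1) a x = 0 -> x = a.
Proof.
move=> dist0.
have term_ge0 k : 0 <= (const_mx 1 : 'rV[R]_m) 0 k * (x 0 k - a 0 k) ^+ 2.
  by rewrite mxE mul1r sqr_ge0.
apply/rowP => k; apply/eqP; rewrite -subr_eq0 -sqrf_eq0.
have := psumr_eq0P (fun k _ => term_ge0 k) dist0 (i := k) isT.
by rewrite mxE mul1r => ->.
Qed.

Lemma is_derive_wsqdist F (dF : 'rV[R]_m) c a (s : R) : is_derive s 1 F dF ->
  is_derive s 1 (wsqdist c a \o F)
    (2 * \sum_k c 0 k * (F s 0 k - a 0 k) * dF 0 k).
Proof.
move=> Fs.
have dFk k : is_derive s 1 (fun u => F u 0 k - a 0 k) (dF 0 k).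
  have dFs : derivable F s 1 by exact: ex_derive.
  have dk := (derivable_mxP F s 1).1 dFs 0 k.
  have <- : 'D_1 F s = dF by exact: derive_val.
  by rewrite (derive_mx dFs) mxE -[X in is_derive _ _ _ X]subr0; apply: is_deriveB.
have dsq k : is_derive s 1 (fun u => c 0 k * (F u 0 k - a 0 k) ^+ 2)
               (2 * (c 0 k * (F s 0 k - a 0 k) * dF 0 k)).
  have -> : (fun u => c 0 k * (F u 0 k - a 0 k) ^+ 2) =
            c 0 k \*: (fun u => F u 0 k - a 0 k) ^+ 2.
    by apply/funext => u; rewrite /= exprfctE.
  apply: is_derive_eq (is_deriveZ (c 0 k) (is_deriveX 2 (dFk k))) _.
  by rewrite /GRing.scale /= expr1; ring.
rewrite mulr_sumr.
have -> : wsqdist c a \o F = \sum_k (fun u => c 0 k * (F u 0 k - a 0 k) ^+ 2).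
  by apply/funext => u; rewrite fct_sumE.
exact: is_derive_sum.
Qed.

End weighted_square_distance.

Section homogeneous.
Variables (R : realType) (p q : nat).
Implicit Types (f g : 'rV[R]_p -> 'rV[R]_q) (x : 'rV[R]_p).

Lemma is_derive_ray f x (s : R) : differentiable f (s *: x) ->
  is_derive s 1 (fun u => f (u *: x)) (x *m 'J f (s *: x)).
Proof.
move=> df.
have quotients : (fun t => t^-1 *: (f ((t *: 1 + s) *: x) - f (s *: x))) =
                 (fun t => t^-1 *: (f (t *: x + s *: x) - f (s *: x))).
  by apply/funext => t; rewrite scalerDl [t *: 1]mulr1.
apply: DeriveDef; first by rewrite /derivable quotients; exact: diff_derivable.
by rewrite /derive quotients -deriveEjacobian.
Qed.

Lemma homogeneous_neg_degree_eq0 (h : R) g : h < 0 -> homogeneous h g ->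
  forall x, g x = 0.
Proof.
move=> h_lt0 [dg euler] x.
pose E u := wsqdist (const_mx 1) 0 (g (u *: x)).
have dE (u : R) : is_derive u 1 E
    (2 * \sum_k g (u *: x) 0 k * (x *m 'J g (u *: x)) 0 k).
  have dray := is_derive_ray (dg (u *: x)).
  apply: is_derive_eq (is_derive_wsqdist (const_mx 1) 0 dray) _; congr (_ * _).
  by apply: eq_bigr => k _; rewrite !mxE mul1r subr0.
have E_nonincr : E 1 <= E 0.
  apply: (@ler0_derive1_le_cc _ E 0 1).
  - by move=> u _; have dEu := dE u; exact: ex_derive.
  - move=> u /andP[u_gt0 _].
    have dEu := dE u; rewrite derive1E derive_val pmulr_rle0 //.
    have -> : x *m 'J g (u *: x) = (h * u)^-1 *: g (u *: x).
      rewrite [in RHS]euler -scalemxAl !scalerA mulVf ?scale1r //.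
      by rewrite mulf_neq0 ?(ltr0_neq0 h_lt0) ?(lt0r_neq0 u_gt0).
    apply: sumr_le0 => k _; rewrite mxE mulrCA -expr2 nmulr_rle0 ?sqr_ge0 //.
    by rewrite invr_lt0 nmulr_rlt0.
  - by apply: derivable_within_continuous => u _; have dEu := dE u; exact: ex_derive.
  - by rewrite bound_itvE ler01.
  - by rewrite bound_itvE ler01.
  - exact: ler01.
have g0 : g 0 = 0 by rewrite euler mul0mx scaler0.
have E1_le0 : E 1 <= 0 by rewrite (le_trans E_nonincr) // /E scale0r g0 wsqdistxx.
apply: wsqdist1_eq0; apply/eqP; rewrite eq_le -[x in g x]scale1r E1_le0.
by rewrite wsqdist_ge0 // => k; rewrite mxE.
Qed.

Lemma homogeneous_nonneg_degree (h : R) g : homogeneous h g ->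
  exists2 h', 0 <= h' & forall x, g x = h' *: (x *m 'J g x).
Proof.
move=> hom; have [h_lt0|h_ge0] := ltrP h 0; last by exists h => //; case: hom.
exists 0 => // x; rewrite scale0r; exact: homogeneous_neg_degree_eq0 hom x.
Qed.

End homogeneous.

Section mulmxr_differentiable.
Variables (R : realType) (m k : nat) (B : 'M[R]_(m, k)).

Lemma differentiable_mulmxr (x : 'rV[R]_m) : differentiable (mulmxr B) x.
Proof.
have -> : mulmxr B = \sum_i (fun y : 'rV[R]_m => y 0 i *: row i B).
  by apply/funext => y; rewrite fct_sumE /= mulmx_sum_row.
apply: differentiable_sum => i; apply: differentiableZl.
exact: differentiable_coord.
Qed.

Lemma diff_mulmxr (x : 'rV[R]_m) : 'd (mulmxr B) x = mulmxr B :> (_ -> _).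
Proof.
apply: diff_lin => y; apply: differentiable_continuous.
exact: differentiable_mulmxr.
Qed.

End mulmxr_differentiable.

Section residual_homogeneous.
Variables (R : realType) (n d1 d2 : nat) (Phi : 'M[R]_(n, d1)).
Variable g : 'rV[R]_d2 -> 'rV[R]_n.
Hypothesis g_diff : forall x, differentiable g x.
Implicit Types th v : 'rV[R]_(d1 + d2).

Lemma resV_split : resV Phi g = (mulmxr Phi^T \o lsubmx) + (g \o rsubmx).
Proof. by apply/funext => th; rewrite /resV matvecE. Qed.

Lemma resV_jacobian th v : v *m 'J (resV Phi g) th =
  lsubmx v *m Phi^T + rsubmx v *m 'J g (rsubmx th).
Proof.
have dlsub := differentiable_lsubmx th.
have drsub := differentiable_rsubmx th.
have dPhi := differentiable_mulmxr Phi^T (lsubmx th).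
have Dlsub : 'd lsubmx th = lsubmx :> ('rV[R]_(d1 + d2) -> 'rV[R]_d1).
  exact/diff_lin/continuous_lsubmx.
have Drsub : 'd rsubmx th = rsubmx :> ('rV[R]_(d1 + d2) -> 'rV[R]_d2).
  exact/diff_lin/continuous_rsubmx.
rewrite /jacobian !mul_rV_lin1 resV_split.
rewrite (diffD (differentiable_comp dlsub dPhi)
               (differentiable_comp drsub (g_diff _))).
(* [rewrite diff_comp] under the sum does not terminate in reasonable time *)
apply: etrans (congr2 +%R (congr1 (fun f => f v) (diff_comp dlsub dPhi))
                         (congr1 (fun f => f v) (diff_comp drsub (g_diff _)))) _.
by rewrite /= diff_mulmxr Dlsub Drsub.
Qed.

Lemma resV_euler (h : R) w th : (forall x, g x = h *: (x *m 'J g x)) ->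
  row_mx (lsubmx th - w) (h *: rsubmx th) *m 'J (resV Phi g) th =
  resV Phi g th - matvec Phi w.
Proof.
move=> euler; rewrite resV_jacobian row_mxKl row_mxKr mulmxBl -scalemxAl -euler.
by rewrite /resV !matvecE addrAC.
Qed.

End residual_homogeneous.

Section lyapunov.
Variable R : realType.
Implicit Types (E dE f : R -> R).

Lemma limf_einf_pinfty_le f (B : R) :
  (forall M c, B < c -> ~ (forall t, M < t -> c <= f t)) ->
  (limf_einf (fun t => (f t)%:E) (@pinfty_nbhs R) <= B%:E)%E.
Proof.
move=> not_eventually_ge; rewrite limf_einfE.
apply: ge_ereal_sup => _ [V [M [_ MV]] <-]; rewrite leNgt; apply/negP => B_lt.
have inf_le t : M < t -> (ereal_inf [set (f t)%:E | t in V] <= (f t)%:E)%E.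
  by move=> Mt; apply: ereal_inf_lbound; exists t => //; exact: MV.
move: B_lt inf_le; case: (ereal_inf _) => [c | |] B_lt inf_le.
- apply: (not_eventually_ge M c); first by rewrite -lte_fin.
  by move=> t Mt; rewrite -lee_fin; exact: inf_le.
- by have := inf_le (M + 1); rewrite ltrDl ltr01 leye_eq => /(_ isT).
- by move: B_lt; rewrite ltNge leNye.
Qed.

Lemma nonneg_derive_not_le_neg E dE (T d : R) : 0 < d ->
  (forall t, 0 <= E t) -> (forall t, T < t -> is_derive t 1 E (dE t)) ->
  ~ (forall t, T < t -> dE t <= - d).
Proof.
move=> d_gt0 E_ge0 dE_T dE_le.
pose a := T + 1; pose b := a + (E a / d + 1).
have Ta : T < a by rewrite /a ltrDl.
have ab : a < b by rewrite /b ltrDl; have := divr_ge0 (E_ge0 a) (ltW d_gt0); lra.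
have [xi /andP[a_xi _] mvt] :
    exists2 xi, xi \in `]a, b[ & E b - E a = dE xi * (b - a).
  apply: MVT => // [x /andP[ax _]|]; first exact: dE_T (lt_trans Ta ax).
  apply: derivable_within_continuous => x /andP[ax _].
  by have dEx := dE_T x (lt_le_trans Ta ax); exact: ex_derive.
have : dE xi * (b - a) <= - d * (b - a).
  by rewrite ler_wpM2r ?dE_le ?(lt_trans Ta) // subr_ge0 ltW.
have -> : - d * (b - a) = - E a - d by rewrite /b addrAC subrr add0r; field; lra.
have := E_ge0 b; lra.
Qed.

Lemma lyapunov_limf_einf_le E dE f (K a : R) :
  0 < a -> 0 <= K -> (forall t, 0 <= E t) ->
  (forall t : R, 0 < t -> is_derive t 1 E (dE t)) ->
  (forall t : R, 0 < t -> dE t <= K * f t - a * f t ^+ 2) ->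
  (limf_einf (fun t => (f t)%:E) (@pinfty_nbhs R) <= (K / a)%:E)%E.
Proof.
move=> a_gt0 K_ge0 E_ge0 dE_pos dE_le.
apply: limf_einf_pinfty_le => M c Ka_lt_c f_ge_c.
have K_lt : K < a * c by rewrite mulrC -ltr_pdivrMr.
have c_gt0 : 0 < c by apply: le_lt_trans Ka_lt_c; exact: divr_ge0 (ltW a_gt0).
pose T := Num.max M 0.
apply: (@nonneg_derive_not_le_neg E dE T (c * (a * c - K))) => //.
- by rewrite mulr_gt0 // subr_gt0.
- by move=> t; rewrite gt_max => /andP[_ t_gt0]; exact: dE_pos.
move=> t; rewrite gt_max => /andP[Mt t_gt0].
have fc := f_ge_c t Mt; have := dE_le t t_gt0.
have : 0 <= (f t - c) * (a * (f t + c) - K).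
  by apply: mulr_ge0; [rewrite subr_ge0 | nra].
nra.
Qed.

End lyapunov.

Section residual_homogeneous_flow.
Variables (R : realType) (n d1 d2 : nat) (P : 'M[R]_n) (mu : 'rV[R]_n).
Variables (gamma : R) (Vstar : 'rV[R]_n).
Variables (Phi : 'M[R]_(n, d1)) (g : 'rV[R]_d2 -> 'rV[R]_n) (h : R).
Variables (w : 'rV[R]_d1) (theta : R -> 'rV[R]_(d1 + d2)).
Hypothesis g_diff : forall x, differentiable g x.
Hypothesis euler : forall x, g x = h *: (x *m 'J g x).
Hypothesis flow : forall t, 0 < t -> derivable theta t 1 /\
  'D_1 theta t = - ('J (resV Phi g) (theta t) *m Amat mu gamma P
                      *m (resV Phi g (theta t) - Vstar)^T)^T.

Lemma is_derive_wsqdist_flow (t : R) : 0 < t ->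
  is_derive t 1 (wsqdist (row_mx (const_mx 1) (const_mx h)) (row_mx w 0) \o theta)
    (- 2 * muinner mu (resV Phi g (theta t) - matvec Phi w)
             (matvec (1%:M - gamma *: P) (resV Phi g (theta t) - Vstar))).
Proof.
move=> t_gt0; have [dtheta Dtheta] := flow t_gt0.
apply: is_derive_eq (is_derive_wsqdist _ _ (derivableP dtheta)) _.
set z := row_mx (lsubmx (theta t) - w) (h *: rsubmx (theta t)).
rewrite [X in 2 * X](_ : _ = (z *m ('D_1 theta t)^T) 0 0); last first.
  rewrite mxE; apply: eq_bigr => k _; rewrite [_^T _ _]mxE; congr (_ * _).
  rewrite /z -(splitK k); case: (fintype.split k) => j.
    by rewrite !row_mxEl !mxE mul1r.
  by rewrite !row_mxEr !mxE subr0.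
rewrite Dtheta linearN /= trmxK mulmxN mxE !mulmxA resV_euler //.
by rewrite muinner_matvec_mulmx mulmxA mulrN mulNr.
Qed.

End residual_homogeneous_flow.

Unset Implicit Arguments.

Theorem theorem2 (R : realType) (n d1 d2 : nat)
  (P : 'M[R]_n) (mu : 'rV[R]_n) (r : 'I_n -> 'I_n -> R) (gamma : R)
  (Vstar : 'rV[R]_n)
  (Phi : 'M[R]_(n, d1)) (g : 'rV[R]_d2 -> 'rV[R]_n) (h C l : R)
  (PiVstar : 'rV[R]_n)
  (theta0 : 'rV[R]_(d1 + d2)) (theta : R -> 'rV[R]_(d1 + d2)) :
  (* the Markov reward process *)
  stochastic P -> irreducible P -> aperiodic P -> stationary_dist P mu ->
  0 <= gamma < 1 ->
  Vstar = exp_reward P r + gamma *: matvec P Vstar ->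
  (* the residual-homogeneous parametrization *)
  \rank Phi = minn n d1 ->
  C1 g -> homogeneous h g ->
  0 < C -> 0 < l ->
  (forall th : 'rV[R]_(d1 + d2),
      munorm mu (resV Phi g th) <= C * (euclid_norm th) `^ l) ->
  (* PiVstar = Pi_Phi Vstar, the mu-orthogonal projection onto span(Phi) *)
  (exists w : 'rV[R]_d1, PiVstar = matvec Phi w) ->
  (forall u : 'rV[R]_d1, muinner mu (matvec Phi u) (Vstar - PiVstar) = 0) ->
  (* the trajectory: theta(0) = theta0, right-continuous at 0, and for t > 0
     d/dt theta = - nabla V(theta)^T A (V(theta) - Vstar)
     (nabla V(theta)^T = 'J (resV Phi g) theta in the row-vector convention) *)
  theta 0 = theta0 ->
  (theta @ (0:R)^'+) --> theta 0 ->
  (forall t, 0 < t -> derivable theta t 1 /\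
     'D_1 theta t =
       - ('J (resV Phi g) (theta t) *m Amat mu gamma P
            *m (resV Phi g (theta t) - Vstar)^T)^T) ->
  (limf_einf (fun t => (munorm mu (resV Phi g (theta t) - PiVstar))%:E)
     (@pinfty_nbhs R) <=
   ((munorm mu (matvec (1%:M - gamma *: P) (Vstar - PiVstar))) / (1 - gamma))%:E)%E.
Proof.
move=> P_stoch _ _ mu_stat /andP[gamma_ge0 gamma_lt1] _ _ _ hom _ _ _ [w ->] _ _ _
  flow.
have [h' h'_ge0 euler] := homogeneous_nonneg_degree hom.
pose e t := resV Phi g (theta t) - matvec Phi w.
set K := munorm mu (matvec _ _).
have -> : K / (1 - gamma) = (2 * K) / (2 * (1 - gamma)).
  by rewrite invfM mulrACA divff ?mul1r.
apply: (@lyapunov_limf_einf_le _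
  (wsqdist (row_mx (const_mx 1) (const_mx h')) (row_mx w 0) \o theta)
  (fun t => - 2 * muinner mu (e t)
                  (matvec (1%:M - gamma *: P) (resV Phi g (theta t) - Vstar)))
  (fun t => munorm mu (e t))).
- lra.
- by rewrite mulr_ge0 ?sqrtr_ge0.
- move=> t; apply: wsqdist_ge0 => k; rewrite -(splitK k).
  by case: (fintype.split k) => j; rewrite ?row_mxEl ?row_mxEr mxE.
- by move=> t /(is_derive_wsqdist_flow w hom.1 euler flow).
move=> t t_gt0.
have := muinner_subZ_ge P_stoch mu_stat (e t) (Vstar - matvec Phi w) gamma_ge0.
rewrite /e opprB addrA subrK -/K; nra.
Qed.
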